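(* Let $n\ge4$ be even. There exists a quantum query algorithm making exactly 2 queries to the oracle $O_x$ such that, for every $x\in\{0,1\}^n$ with $|x|=n/2$, the algorithm outputs $1$ with probability $1$, and for every $x\in\{0,1\}^n$ with $|x|\in\{0,1,n-1,n\}$, the algorithm outputs $0$ with probability $1$.
   Context: $|x|$ denotes the Hamming weight of a bit string $x$. Quantum query model: a $t$-query quantum query algorithm on inputs $x\in\{0,1\}^n$ acts on a Hilbert space $\mathcal H_{\rm in}\otimes\mathcal H_{\rm work}\otimes\mathcal H_{\rm out}$, where $\mathcal H_{\rm in}$ has orthonormal basis $|0\rangle,\dots,|n\rangle$, $\mathcal H_{\rm work}$ is a finite-dimensional workspace of arbitrary size, and $\mathcal H_{\rm out}$ is one qubit. It is specified by input-independent unitaries $U_0,\dots,U_t$, and on input $x$ produces the state $U_tO_xU_{t-1}O_x\cdots O_xU_0|0\rangle$ ($t$ applications of $O_x$), where the oracle $O_x$ acts on $\mathcal H_{\rm in}$ by $|i\rangle\mapsto(-1)^{x_i}|i\rangle$ with the convention $x_0=0$ (and as the identity on the other registers). The output is obtained by measuring $\mathcal H_{\rm out}$ in the computational basis. *)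

From HB Require Import structures.
From mathcomp Require Import all_boot all_order all_algebra all_field.
Set Implicit Arguments. Unset Strict Implicit. Unset Printing Implicit Defensive.
Import Order.TTheory GRing.Theory Num.Theory.
Local Open Scope ring_scope.

(* Basis index of H_in (x) H_work (x) H_out:
   H_in has basis |0>,...,|n>  ('I_n.+1),
   H_work has dimension d.+1 (any finite positive dimension, basis 'I_d.+1),
   H_out is one qubit (bool; true = |1>). *)
Definition qidx (n d : nat) : finType := ('I_n.+1 * 'I_d.+1 * bool)%type.

Definition qdim (n d : nat) : nat := #|{: qidx n d}|.

Definition qbasis (n d : nat) (k : 'I_(qdim n d)) : qidx n d := enum_val k.

Definition hweight (n : nat) (x : 'I_n -> bool) : nat := #|[set i | x i]|.

(* x_i with the convention x_0 = 0; index i in 0..n, with x_i (i>=1) = x (i-1) *)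
Definition xext (n : nat) (x : 'I_n -> bool) (i : 'I_n.+1) : bool :=
  match unlift ord0 i with Some j => x j | None => false end.

Definition oracle (n d : nat) (x : 'I_n -> bool) : 'M[algC]_(qdim n d) :=
  diag_mx (\row_k (if xext x (qbasis k).1.1 then -1 else 1)).

Definition init_state (n d : nat) : 'cV[algC]_(qdim n d) :=
  delta_mx (enum_rank ((ord0, ord0, false) : qidx n d)) 0.

(* A t-query algorithm is given by U_0 and the list [U_1; ...; U_t];
   the final state is U_t O_x U_{t-1} O_x ... O_x U_0 |0>. *)
Definition final_state (n d : nat) (U0 : 'M[algC]_(qdim n d))
  (Us : seq 'M[algC]_(qdim n d)) (x : 'I_n -> bool) : 'cV[algC]_(qdim n d) :=
  foldl (fun psi U => U *m (oracle d x *m psi)) (U0 *m init_state n d) Us.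

Definition prob_out (n d : nat) (U0 : 'M[algC]_(qdim n d))
  (Us : seq 'M[algC]_(qdim n d)) (x : 'I_n -> bool) (b : bool) : algC :=
  \sum_(k < qdim n d | (qbasis k).2 == b)
     `|final_state U0 Us x k 0| ^+ 2.

From HB Require Import structures.
From mathcomp Require Import all_boot all_order all_algebra all_field.
From mathcomp Require Import ring zify.
Import Order.TTheory GRing.Theory Num.Theory.
Local Open Scope ring_scope.
Set Implicit Arguments. Unset Strict Implicit. Unset Printing Implicit Defensive.

(* Write s_j = (-1)^(x_j) and
   S = sum_j s_j = n - 2|x|.  The workspace is spanned by |0> and one vector
   |(a,b)> per pair of input positions.
   - U0 sends |0,0> to n^(-1/2) sum_j |j,0>; the first query signs it by s_j.
   - V sends |j,0> to f_j = n^(-1/2) |0,0> + kappa^(-1/2) g_j, where the gadget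
     g_m = sum_(j, a, b <> j) ([a = m] - [b = m]) |j,(a,b)>; the f_j are
     orthonormal.  The second query yields a state phi.
   - W flips the output qubit exactly on the orthogonal complement of
     Z = span(|0,0>, g_1, ..., g_n).
   Computing the projection of phi onto Z shows it is 0 when S = 0 and phi
   itself when x is nearly constant (then s_j (s_a - s_b) = S/(n-2) (s_a - s_b)
   for a, b <> j).  As every step is unitary the two output probabilities sum
   to 1, so it suffices that the amplitudes of the wrong output vanish. *)

Lemma sum_delta (T : finType) (j : T) (F : T -> algC) :
  \sum_a (a == j)%:R * F a = F j.
Proof.
rewrite (bigD1 j) //= eqxx mul1r big1 ?addr0 // => a /negbTE ->; by rewrite mul0r.
Qed.

Lemma sum_delta' (T : finType) (j : T) (F : T -> algC) :
  \sum_a (j == a)%:R * F a = F j.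
Proof. by rewrite -(sum_delta j); apply: eq_bigr => a _; rewrite eq_sym. Qed.

Lemma sum_delta1 (T : finType) (j : T) : \sum_a (a == j)%:R = 1 :> algC.
Proof.
by rewrite (eq_bigr (fun a => (a == j)%:R * 1)) ?(sum_delta j (fun _ => 1)) // => a _; rewrite mulr1.
Qed.

Lemma sum_delta1' (T : finType) (j : T) : \sum_a (j == a)%:R = 1 :> algC.
Proof. by under eq_bigr do rewrite eq_sym; exact: sum_delta1. Qed.

Lemma sum_neq (T : finType) (j : T) (F : T -> algC) :
  \sum_a (a != j)%:R * F a = \sum_a F a - F j.
Proof.
rewrite (bigD1 j) //= eqxx mul0r add0r [X in _ = X - _](bigD1 j) //= addrC addrK.
by apply: eq_bigr => a ->; rewrite mul1r.
Qed.

Lemma sum_option (T : finType) (F : option T -> algC) :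
  \sum_(o : option T) F o = F None + \sum_(t : T) F (Some t).
Proof.
rewrite (bigD1 None) //=; congr (_ + _).
rewrite (reindex_omap Some (fun o => o)) //=; last by case.
by apply: eq_bigl => t; rewrite eqxx.
Qed.

Lemma sum_pair (A B : finType) (F : (A * B)%type -> algC) :
  \sum_(v : A * B) F v = \sum_(a : A) \sum_(b : B) F (a, b).
Proof. by rewrite pair_bigA; apply: eq_bigr; case. Qed.

Section Norm.
Local Open Scope sesquilinear_scope.

Definition sqnorm (N : nat) (v : 'cV[algC]_N) : algC := \sum_k `|v k 0| ^+ 2.

Lemma sqnormE (N : nat) (v : 'cV[algC]_N) : sqnorm v = (v ^t* *m v) 0 0.
Proof. by rewrite mxE; apply: eq_bigr => k _; rewrite !mxE normCK mulrC. Qed.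

Lemma sqnorm_unitary (N : nat) (M : 'M[algC]_N) (v : 'cV[algC]_N) :
  M \is unitarymx -> sqnorm (M *m v) = sqnorm v.
Proof.
by move=> Mu; rewrite !sqnormE trmx_mul map_mxM mulmxA (mulmxKtV _ Mu).
Qed.

Lemma sqnorm_oracle (n d : nat) (x : 'I_n -> bool) (v : 'cV[algC]_(qdim n d)) :
  sqnorm (oracle d x *m v) = sqnorm v.
Proof.
apply: eq_bigr => k _; rewrite mul_diag_mx !mxE normrM.
by case: ifP; rewrite ?normrN normr1 mul1r.
Qed.

Lemma sqnorm_init (n d : nat) : sqnorm (init_state n d) = 1.
Proof.
rewrite /sqnorm (bigD1 (enum_rank ((ord0, ord0, false) : qidx n d))) //=.
rewrite big1 => [|k /negbTE nk]; first by rewrite !mxE !eqxx normr1 expr1n addr0.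
by rewrite !mxE nk normr0 expr0n.
Qed.

Lemma sqnorm_final (n d : nat) (U0 : 'M[algC]_(qdim n d)) (Us : seq 'M[algC]_(qdim n d))
    (x : 'I_n -> bool) :
  U0 \is unitarymx -> all (fun U => U \is unitarymx) Us ->
  sqnorm (final_state U0 Us x) = 1.
Proof.
move=> U0u; rewrite /final_state -(sqnorm_init n d) -(sqnorm_unitary (init_state n d) U0u).
elim: Us (U0 *m init_state n d) => [|U Us IH] v //= /andP[Uu Usu].
by rewrite IH // sqnorm_unitary // sqnorm_oracle.
Qed.
End Norm.

Lemma prob_out_total (n d : nat) (U0 : 'M[algC]_(qdim n d)) (Us : seq 'M[algC]_(qdim n d))
    (x : 'I_n -> bool) :
  U0 \is unitarymx -> all (fun U => U \is unitarymx) Us ->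
  prob_out U0 Us x true + prob_out U0 Us x false = 1.
Proof.
move=> U0u Usu; rewrite -(sqnorm_final x U0u Usu) /sqnorm (bigID (fun k => (qbasis k).2)) /=.
by congr (_ + _); apply: eq_bigl => k; rewrite ?eqb_id ?eqbF_neg.
Qed.

Section Coordinates.
Variable n : nat.

(* Basis of H_in (x) H_work: the input index (None = |0>) and the workspace
   index, the workspace being spanned by |0> (None) and one vector per pair
   (a, b) of input positions. *)
Definition Reg : finType := (option 'I_n * option ('I_n * 'I_n))%type.
Definition dwork : nat := #|{: 'I_n * 'I_n}|.
Definition Basis : finType := (Reg * bool)%type.

Definition decode_work (w : 'I_dwork.+1) : option ('I_n * 'I_n) :=
  omap enum_val (unlift ord0 w).
Definition encode_work (o : option ('I_n * 'I_n)) : 'I_dwork.+1 :=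
  oapp (fun p => lift ord0 (enum_rank p)) ord0 o.
Definition decode (k : qidx n dwork) : Basis :=
  ((unlift ord0 k.1.1, decode_work k.1.2), k.2).
Definition encode (v : Basis) : qidx n dwork :=
  ((oapp (lift ord0) ord0 v.1.1, encode_work v.1.2), v.2).

Lemma encodeK : cancel encode decode.
Proof.
case=> [[i w] b]; rewrite /decode /encode /=; congr (_, _, _).
  by case: i => [i|] /=; rewrite ?liftK ?unlift_none.
by case: w => [p|]; rewrite /decode_work /encode_work /= ?liftK ?unlift_none //= enum_rankK.
Qed.

Lemma decodeK : cancel decode encode.
Proof.
case=> [[i w] b]; rewrite /decode /encode /=; congr (_, _, _); first by case: unliftP.
by rewrite /decode_work /encode_work; case: unliftP => [j ->|->] //=; rewrite enum_valK.
Qed.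

Lemma decode_inj : injective decode.
Proof. exact: can_inj decodeK. Qed.

Lemma sum_decode (F : Basis -> algC) :
  \sum_(k < qdim n dwork) F (decode (qbasis k)) = \sum_v F v.
Proof.
rewrite (reindex (fun v => enum_rank (encode v))) /=.
  by apply: eq_bigr => v _; rewrite /qbasis enum_rankK encodeK.
exists (fun k => decode (enum_val k)) => [v _|k _]; first by rewrite enum_rankK encodeK.
by rewrite decodeK enum_valK.
Qed.

Notation N := (qdim n dwork).

Definition kmx (K : Basis -> Basis -> algC) : 'M[algC]_N :=
  \matrix_(k, l) K (decode (qbasis k)) (decode (qbasis l)).
Definition kvec (v : Basis -> algC) : 'cV[algC]_N := \col_k v (decode (qbasis k)).
Definition kapply (K : Basis -> Basis -> algC) (v : Basis -> algC) : Basis -> algC :=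
  fun a => \sum_b K a b * v b.

Lemma kmx_kvec K v : kmx K *m kvec v = kvec (kapply K v).
Proof.
apply/colP => k; rewrite !mxE /kapply -(sum_decode (fun b => K _ b * v b)).
by apply: eq_bigr => l _; rewrite !mxE.
Qed.

Lemma eq_kvec (f g : Basis -> algC) : f =1 g -> kvec f = kvec g.
Proof. by move=> fg; apply/colP => k; rewrite !mxE fg. Qed.

Lemma kmx_unitary K :
  (forall a b, K b a = K a b) -> (forall a b, (K a b)^* = K a b) ->
  (forall a b, \sum_c K a c * K c b = (a == b)%:R) -> kmx K \is unitarymx.
Proof.
move=> Ksym Kreal KK; apply/unitarymxP/matrixP => k l; rewrite !mxE.
rewrite -(inj_eq (@enum_val_inj _ _)) -(inj_eq decode_inj) -KK -sum_decode.
by apply: eq_bigr => m _; rewrite !mxE Kreal; congr (_ * _); exact: Ksym.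
Qed.

Definition sgn (x : 'I_n -> bool) (j : 'I_n) : algC := if x j then -1 else 1.
Definition oracle_sign (x : 'I_n -> bool) (a : Basis) : algC :=
  if a.1.1 is Some j then sgn x j else 1.

Lemma oracle_kvec x v : oracle dwork x *m kvec v = kvec (fun a => oracle_sign x a * v a).
Proof.
apply/colP => k; rewrite mul_diag_mx !mxE /oracle_sign /xext /=.
by case: (unlift ord0 _).
Qed.

Definition start : Basis := ((None, None), false).

Lemma init_kvec : init_state n dwork = kvec (fun a => (a == start)%:R).
Proof.
apply/colP => k; rewrite !mxE andbT.
have -> : start = decode ((ord0, ord0, false) : qidx n dwork).
  by rewrite /decode /decode_work /= unlift_none /= unlift_none.
by rewrite (inj_eq decode_inj) -(inj_eq (@enum_val_inj _ _)) enum_rankK.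
Qed.

Lemma prob_out_kvec U0 V W x b (phi : Basis -> algC) :
  W *m (oracle dwork x *m (V *m (oracle dwork x *m (U0 *m init_state n dwork)))) = kvec phi ->
  prob_out U0 [:: V; W] x b = \sum_(p : Reg) `|phi (p, b)| ^+ 2.
Proof.
move=> final; rewrite /prob_out /final_state /= final big_mkcond /=.
under eq_bigr do rewrite mxE.
rewrite (sum_decode (fun v => if v.2 == b then `|phi v| ^+ 2 else 0)) sum_pair.
by apply: eq_bigr => p _; rewrite big_bool; case: b; rewrite /= ?addr0 ?add0r.
Qed.

End Coordinates.

Section Reflections.
Variables (V I : finType) (Q : I -> V -> algC).

(* The kernel of I - sum_i q_i q_i^T; when the q_i are pairwise orthogonal of
   squared norm 2 this is the reflection negating their span. *)
Definition refl (a b : V) : algC := (a == b)%:R - \sum_i Q i a * Q i b.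

Lemma refl_sym a b : refl b a = refl a b.
Proof. by rewrite /refl eq_sym; congr (_ - _); apply: eq_bigr => i _; rewrite mulrC. Qed.

Lemma refl_real a b : (forall i c, Q i c \is Num.real) -> refl a b \is Num.real.
Proof. by move=> HQ; rewrite /refl rpredB ?realn // rpred_sum // => i _; rewrite rpredM. Qed.

Lemma refl_apply (v : V -> algC) a :
  \sum_b refl a b * v b = v a - \sum_i Q i a * (\sum_b Q i b * v b).
Proof.
rewrite /refl; under eq_bigr do rewrite mulrBl.
rewrite sumrB sum_delta'; congr (_ - _).
under eq_bigr do rewrite mulr_suml.
rewrite exchange_big /=; apply: eq_bigr => i _.
by rewrite mulr_sumr; apply: eq_bigr => b _; rewrite mulrA.
Qed.

Lemma refl_involutive :
  (forall i j, \sum_c Q i c * Q j c = 2%:R * (i == j)%:R) ->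
  forall a b, \sum_c refl a c * refl c b = (a == b)%:R.
Proof.
move=> HQ a b; rewrite /refl.
have expand c : ((a == c)%:R - \sum_i Q i a * Q i c) * ((c == b)%:R - \sum_i Q i c * Q i b)
  = (a == c)%:R * (c == b)%:R - (a == c)%:R * (\sum_i Q i c * Q i b)
    - (c == b)%:R * (\sum_i Q i a * Q i c)
    + (\sum_i Q i a * Q i c) * (\sum_i Q i c * Q i b) by ring.
under eq_bigr do rewrite expand.
rewrite !big_split /= !sumrN !sum_delta' sum_delta.
have gram : \sum_c (\sum_i Q i a * Q i c) * (\sum_i Q i c * Q i b)
   = \sum_i \sum_j Q i a * Q j b * (\sum_c Q i c * Q j c).
  under eq_bigr do rewrite big_distrlr /=.
  rewrite exchange_big /=; apply: eq_bigr => i _.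
  rewrite exchange_big /=; apply: eq_bigr => j _.
  by rewrite mulr_sumr; apply: eq_bigr => c _; ring.
have diag i : \sum_j Q i a * Q j b * (\sum_c Q i c * Q j c) = 2%:R * (Q i a * Q i b).
  under eq_bigr do rewrite HQ.
  rewrite (eq_bigr (fun j => 2%:R * ((i == j)%:R * (Q i a * Q j b)))); last by move=> j _; ring.
  by rewrite -mulr_sumr sum_delta'.
by rewrite gram (eq_bigr _ (fun i _ => diag i)) -mulr_sumr; ring.
Qed.

End Reflections.

Lemma proj_refl_involutive (V : finType) (P : V -> V -> algC) :
  (forall a b, \sum_c P a c * P c b = P a b) ->
  forall a b, \sum_c ((a == c)%:R - 2%:R * P a c) * ((c == b)%:R - 2%:R * P c b) = (a == b)%:R.
Proof.
move=> HP a b.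
have expand c : ((a == c)%:R - 2%:R * P a c) * ((c == b)%:R - 2%:R * P c b)
  = (a == c)%:R * (c == b)%:R - 2%:R * ((a == c)%:R * P c b) - 2%:R * ((c == b)%:R * P a c)
    + 4%:R * (P a c * P c b) by ring.
under eq_bigr do rewrite expand.
by rewrite !big_split /= !sumrN -!mulr_sumr !sum_delta' sum_delta HP; ring.
Qed.

Section Gadget.
Variable n : nat.
Implicit Types f g : 'I_n -> algC.

Lemma sum_diff_prod f g (a : 'I_n) :
  \sum_b (f a - f b) * (g a - g b) =
  n%:R * (f a * g a) - f a * \sum_b g b - g a * \sum_b f b + \sum_b f b * g b.
Proof.
have expand b : (f a - f b) * (g a - g b) =
   f a * g a - f a * g b - g a * f b + f b * g b by ring.
under eq_bigr do rewrite expand.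
rewrite !big_split /= !sumrN -!mulr_sumr sumr_const card_ord.
by rewrite mulrnAr mulr_natl.
Qed.

Definition avoid (j a b : 'I_n) : algC := (a != j)%:R * (b != j)%:R.

Lemma avoid_idem j a b : avoid j a b * avoid j a b = avoid j a b.
Proof. by rewrite /avoid; case: (a != j); case: (b != j); rewrite /= ?mul1r ?mul0r. Qed.

Lemma sum_avoid_diff_prod f g (j : 'I_n) :
  \sum_a \sum_b avoid j a b * ((f a - f b) * (g a - g b)) =
  2%:R * (n%:R - 1) * (\sum_a f a * g a - f j * g j)
  - 2%:R * (\sum_a f a - f j) * (\sum_a g a - g j).
Proof.
have row a : \sum_b avoid j a b * ((f a - f b) * (g a - g b))
   = (a != j)%:R * (\sum_b (f a - f b) * (g a - g b) - (f a - f j) * (g a - g j)).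
  by rewrite -sum_neq mulr_sumr; apply: eq_bigr => b _; rewrite /avoid; ring.
under eq_bigr do rewrite row.
rewrite sum_neq !subrr mul0r subr0 big_split /= sumrN.
have -> : \sum_a (f a - f j) * (g a - g j) = \sum_a (f j - f a) * (g j - g a).
  by apply: eq_bigr => a _; ring.
rewrite sum_diff_prod; under eq_bigr do rewrite sum_diff_prod.
rewrite !big_split /= !sumrN -!mulr_sumr -!mulr_suml sumr_const card_ord -mulr_natl.
ring.
Qed.

Lemma gadget_gram (m m' : 'I_n) :
  \sum_j \sum_a \sum_b avoid j a b *
     (((a == m)%:R - (b == m)%:R) * ((a == m')%:R - (b == m')%:R)) =
  2%:R * (n%:R - 2%:R) * (n%:R * (m == m')%:R - 1) :> algC.
Proof.
under eq_bigr do rewrite (sum_avoid_diff_prod (fun a => (a == m)%:R) (fun a => (a == m')%:R)).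
rewrite sum_delta !sum_delta1.
have expand (j : 'I_n) :
  2%:R * (n%:R - 1) * ((m == m')%:R - (j == m)%:R * (j == m')%:R)
   - 2%:R * (1 - (j == m)%:R) * (1 - (j == m')%:R) =
  2%:R * (n%:R - 1) * (m == m')%:R - 2%:R * n%:R * ((j == m)%:R * (j == m')%:R)
  - 2%:R + 2%:R * (j == m)%:R + 2%:R * (j == m')%:R :> algC by ring.
under eq_bigr do rewrite expand.
rewrite !big_split /= !sumrN -!mulr_sumr sum_delta !sum_delta1 !sumr_const !card_ord.
ring.
Qed.

Lemma gadget_sign_pairing (s : 'I_n -> algC) (m : 'I_n) : (forall k, s k * s k = 1) ->
  \sum_j s j * (\sum_a \sum_b avoid j a b * (((a == m)%:R - (b == m)%:R) * (s a - s b))) =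
  2%:R * (\sum_j s j) * (n%:R * s m - \sum_j s j).
Proof.
move=> s2; under eq_bigr do rewrite (sum_avoid_diff_prod (fun a => (a == m)%:R) s).
rewrite sum_delta !sum_delta1; set S := \sum_j s j.
have expand (j : 'I_n) :
  s j * (2%:R * (n%:R - 1) * (s m - (j == m)%:R * s j) - 2%:R * (1 - (j == m)%:R) * (S - s j))
  = 2%:R * (n%:R - 1) * s m * s j - 2%:R * (n%:R - 1) * (j == m)%:R - 2%:R * S * s j + 2%:R
    + 2%:R * S * ((j == m)%:R * s j) - 2%:R * (j == m)%:R.
  transitivity (2%:R * (n%:R - 1) * s m * s j - 2%:R * (n%:R - 1) * (j == m)%:R * (s j * s j)
    - 2%:R * S * s j + 2%:R * (s j * s j)
    + 2%:R * S * ((j == m)%:R * s j) - 2%:R * (j == m)%:R * (s j * s j)); first by ring.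
  by rewrite s2; ring.
under eq_bigr do rewrite expand.
rewrite !big_split /= !sumrN -!mulr_sumr sum_delta !sum_delta1 sumr_const card_ord.
by rewrite -/S -mulr_natl; ring.
Qed.

End Gadget.

Section Construction.
Variable n : nat.
Hypothesis n_gt2 : (2 < n)%N.
Notation Reg := (Reg n).
Notation Basis := (Basis n).

(* Normalizations: 1/sqrt n, kappa = 2n(n-2) (the value by which the gadget
   Gram matrix acts on the span of the gadgets), and 1/sqrt kappa. *)
Definition isqrt_n : algC := (sqrtC n%:R)^-1.
Definition kappa : algC := (2 * n * (n - 2))%:R.
Definition isqrt_kappa : algC := (sqrtC kappa)^-1.

Lemma n_neq0 : n%:R != 0 :> algC.
Proof. by rewrite pnatr_eq0; apply/eqP; lia. Qed.

Lemma nsub2_neq0 : n%:R - 2%:R != 0 :> algC.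
Proof. by rewrite -natrB ?pnatr_eq0; [apply/eqP; lia | apply: ltnW]. Qed.

Lemma kappaE : kappa = 2%:R * n%:R * (n%:R - 2%:R).
Proof. by rewrite /kappa !natrM natrB //; apply: ltnW. Qed.

Lemma isqrt_n_sq : isqrt_n * isqrt_n = n%:R^-1.
Proof. by rewrite /isqrt_n -invfM -expr2 sqrtCK. Qed.

Lemma isqrt_kappa_sq : isqrt_kappa * isqrt_kappa = kappa^-1.
Proof. by rewrite /isqrt_kappa -invfM -expr2 sqrtCK. Qed.

Lemma isqrt_n_real : isqrt_n \is Num.real.
Proof. by rewrite /isqrt_n rpredV // sqrtC_real // ler0n. Qed.

Lemma isqrt_kappa_real : isqrt_kappa \is Num.real.
Proof. by rewrite /isqrt_kappa rpredV // sqrtC_real // ler0n. Qed.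

Lemma sum_Reg (F : Reg -> algC) :
  \sum_p F p = F (None, None) + \sum_w F (None, Some w) + \sum_i F (Some i, None)
     + \sum_i \sum_a \sum_b F (Some i, Some (a, b)).
Proof.
rewrite sum_pair sum_option sum_option.
under [X in _ + X]eq_bigr do rewrite sum_option.
rewrite big_split /= !addrA; congr (_ + _).
by apply: eq_bigr => i _; rewrite sum_pair.
Qed.

Lemma sum_Reg_gadget (F : Reg -> algC) :
  (forall w, F (None, w) = 0) -> (forall i, F (Some i, None) = 0) ->
  \sum_p F p = \sum_i \sum_a \sum_b F (Some i, Some (a, b)).
Proof.
move=> F0w Fi0; rewrite sum_Reg F0w big1 ?add0r => [|w _]; last exact: F0w.
by rewrite big1 ?add0r // => i _; exact: Fi0.
Qed.

Definition e0 (p : Reg) : algC := if p is (None, None) then 1 else 0.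
Definition gadget (m : 'I_n) (p : Reg) : algC :=
  if p is (Some j, Some (a, b)) then avoid j a b * ((a == m)%:R - (b == m)%:R) else 0.
Definition unif (p : Reg) : algC := if p is (Some _, None) then isqrt_n else 0.
Definition einp (i : 'I_n) (p : Reg) : algC :=
  if p is (Some k, None) then (k == i)%:R else 0.
Definition fvec (i : 'I_n) (p : Reg) : algC := isqrt_n * e0 p + isqrt_kappa * gadget i p.

Lemma sum_e0 (Y : Reg -> algC) : \sum_r e0 r * Y r = Y (None, None).
Proof.
rewrite sum_Reg /= mul1r !big1 ?addr0 // => i _;
  try apply: big1 => a _; try apply: big1 => b _; by rewrite mul0r.
Qed.

Lemma gadget_dot m m' :
  \sum_p gadget m p * gadget m' p = 2%:R * (n%:R - 2%:R) * (n%:R * (m == m')%:R - 1).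
Proof.
rewrite sum_Reg_gadget => [|w|i] /=; rewrite ?mul0r //.
rewrite -(gadget_gram m m'); apply: eq_bigr => j _; apply: eq_bigr => a _.
by apply: eq_bigr => b _; rewrite mulrACA avoid_idem.
Qed.

(* The gadgets sum to zero, so their Gram matrix acts as kappa on their span. *)
Lemma sum_gadget p : \sum_m gadget m p = 0.
Proof.
case: p => [[j|] [[a b]|]] /=; try by rewrite big1.
by rewrite -mulr_sumr sumrB !sum_delta1' subrr mulr0.
Qed.

Definition out0 (v : Reg -> algC) (a : Basis) : algC := if a.2 then 0 else v a.1.

Lemma dot_out0 u v : \sum_c out0 u c * out0 v c = \sum_p u p * v p.
Proof. by rewrite sum_pair; apply: eq_bigr => p _; rewrite big_bool /out0 /= mul0r add0r. Qed.

(* U0 reflects along e0 - unif (swapping e0 and unif); V reflects along the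
   einp i - fvec i (mapping einp i to fvec i).  Both families are orthogonal
   with squared norm 2. *)
Definition qU0 (i : 'I_1) : Basis -> algC := out0 (fun p => e0 p - unif p).
Definition qV (i : 'I_n) : Basis -> algC := out0 (fun p => einp i p - fvec i p).

Lemma qU0_orth i j : \sum_c qU0 i c * qU0 j c = 2%:R * (i == j)%:R.
Proof.
rewrite (ord1 i) (ord1 j) eqxx mulr1 dot_out0 sum_Reg /e0 /unif /=.
rewrite big1 ?addr0 => [|w _]; last by rewrite subrr mul0r.
rewrite [X in _ + X]big1 ?addr0 => [|k _]; last first.
  by apply: big1 => a _; apply: big1 => b _; rewrite subrr mul0r.
under eq_bigr do rewrite sub0r mulrNN isqrt_n_sq.
by rewrite sumr_const card_ord -(mulr_natr (n%:R^-1) n) mulVf ?n_neq0 // subr0 mulr1.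
Qed.

Lemma qV_orth i j : \sum_c qV i c * qV j c = 2%:R * (i == j)%:R.
Proof.
rewrite dot_out0 sum_Reg /einp /fvec /e0 /=.
rewrite big1 ?addr0 => [|w _]; last by rewrite /= !mulr0 !addr0 subrr mul0r.
have -> : \sum_k ((k == i)%:R - (isqrt_n * 0 + isqrt_kappa * 0)) * ((k == j)%:R - (isqrt_n * 0 + isqrt_kappa * 0))
   = (i == j)%:R :> algC.
  rewrite (eq_bigr (fun k => (k == i)%:R * (k == j)%:R)) ?sum_delta // => k _.
  by rewrite !mulr0 !addr0 !subr0.
have -> : \sum_k \sum_a \sum_b (0 - (isqrt_n * 0 + isqrt_kappa * gadget i (Some k, Some (a, b)))) *
       (0 - (isqrt_n * 0 + isqrt_kappa * gadget j (Some k, Some (a, b))))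
   = isqrt_kappa * isqrt_kappa * \sum_(p : Reg) gadget i p * gadget j p.
  rewrite (@sum_Reg_gadget (fun p : Reg => gadget i p * gadget j p)) => [|w|k] /=; rewrite ?mul0r //.
  rewrite !mulr_sumr; apply: eq_bigr => k _; rewrite !mulr_sumr; apply: eq_bigr => a _.
  by rewrite !mulr_sumr; apply: eq_bigr => b _; ring.
rewrite gadget_dot mulr1 mulr0 !addr0 sub0r mulrNN isqrt_n_sq isqrt_kappa_sq kappaE.
by field; rewrite n_neq0 nsub2_neq0.
Qed.

Definition projZ (p q : Reg) : algC :=
  e0 p * e0 q + kappa^-1 * \sum_m gadget m p * gadget m q.

Lemma gadget_outer_sq p q :
  \sum_r (\sum_m gadget m p * gadget m r) * (\sum_m gadget m r * gadget m q)
   = kappa * \sum_m gadget m p * gadget m q.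
Proof.
have reorder : \sum_r (\sum_m gadget m p * gadget m r) * (\sum_m gadget m r * gadget m q)
   = \sum_m \sum_m' gadget m p * gadget m' q * (\sum_r gadget m r * gadget m' r).
  under eq_bigr do rewrite big_distrlr /=.
  rewrite exchange_big /=; apply: eq_bigr => i _.
  rewrite exchange_big /=; apply: eq_bigr => j _.
  by rewrite mulr_sumr; apply: eq_bigr => c _; ring.
have row m : \sum_m' gadget m p * gadget m' q * (\sum_r gadget m r * gadget m' r)
    = kappa * (gadget m p * gadget m q).
  under eq_bigr do rewrite gadget_dot.
  rewrite (eq_bigr (fun m' => 2%:R * (n%:R - 2%:R) * gadget m p *
     (n%:R * ((m == m')%:R * gadget m' q) - gadget m' q))); last by move=> m' _; ring.
  by rewrite -mulr_sumr sumrB -mulr_sumr sum_delta' sum_gadget subr0 kappaE; ring.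
by rewrite reorder (eq_bigr _ (fun m _ => row m)) -mulr_sumr.
Qed.

Lemma projZ_idem p q : \sum_r projZ p r * projZ r q = projZ p q.
Proof.
have expand r : projZ p r * projZ r q =
   e0 r * (e0 p * e0 q * e0 r + e0 p * kappa^-1 * (\sum_m gadget m r * gadget m q)
            + kappa^-1 * e0 q * (\sum_m gadget m p * gadget m r))
   + kappa^-1 * kappa^-1 * ((\sum_m gadget m p * gadget m r) * (\sum_m gadget m r * gadget m q)).
  by rewrite /projZ; ring.
under eq_bigr do rewrite expand.
rewrite big_split /= sum_e0 -[X in _ + X = _]mulr_sumr gadget_outer_sq.
have e0_gadget u : \sum_m gadget m (None, None) * u m = 0 by rewrite big1 // => m _; rewrite mul0r.
rewrite e0_gadget (eq_bigr (fun m => gadget m (None, None) * gadget m p)) => [|m _]; last exact: mulrC.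
by rewrite e0_gadget /projZ /=; field; rewrite n_neq0 andbT pnatr_eq0; apply/eqP; lia.
Qed.

Lemma projZ_sym p q : projZ q p = projZ p q.
Proof. by rewrite /projZ mulrC; congr (_ + _ * _); apply: eq_bigr => m _; rewrite mulrC. Qed.

Lemma e0_real p : e0 p \is Num.real.
Proof. by case: p => [[?|] [?|]]; rewrite /= ?rpred0 ?rpred1. Qed.

Lemma gadget_real m p : gadget m p \is Num.real.
Proof. by case: p => [[j|] [[a b]|]]; rewrite /= ?rpred0 // rpredM ?rpredB ?rpredM ?realn. Qed.

Lemma projZ_real p q : projZ p q \is Num.real.
Proof.
rewrite /projZ rpredD ?rpredM ?e0_real ?rpredV ?realn //.
by rewrite rpred_sum // => m _; rewrite rpredM ?gadget_real.
Qed.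

Lemma out0_real v a : (forall p, v p \is Num.real) -> out0 v a \is Num.real.
Proof. by move=> vr; rewrite /out0; case: a.2; rewrite ?rpred0. Qed.

(* The three unitaries, as kernels on the basis.  W = I - 2 (I - projZ) (x) |-><-|
   keeps the output qubit on Z and flips it on the orthogonal complement. *)
Definition kU0 : Basis -> Basis -> algC := refl qU0.
Definition kV : Basis -> Basis -> algC := refl qV.
Definition minus_proj (b c : bool) : algC := if b == c then 2^-1 else - 2^-1.
Definition flip_proj (a b : Basis) : algC :=
  ((a.1 == b.1)%:R - projZ a.1 b.1) * minus_proj a.2 b.2.
Definition kW (a b : Basis) : algC := (a == b)%:R - 2%:R * flip_proj a b.

Lemma U0_unitary : kmx kU0 \is unitarymx.
Proof.
apply: kmx_unitary => [a b|a b|]; first exact: refl_sym.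
  apply/conj_Creal/refl_real => i c; apply: out0_real => p.
  by rewrite rpredB ?e0_real //; case: p => [[?|] [?|]]; rewrite /= ?rpred0 ?isqrt_n_real.
exact/refl_involutive/qU0_orth.
Qed.

Lemma V_unitary : kmx kV \is unitarymx.
Proof.
apply: kmx_unitary => [a b|a b|]; first exact: refl_sym.
  apply/conj_Creal/refl_real => i c; apply: out0_real => p.
  rewrite rpredB ?rpredD ?rpredM ?isqrt_n_real ?isqrt_kappa_real ?e0_real ?gadget_real //.
  by case: p => [[?|] [?|]]; rewrite /= ?rpred0 ?realn.
exact/refl_involutive/qV_orth.
Qed.

Lemma minus_proj_idem b c : \sum_o minus_proj b o * minus_proj o c = minus_proj b c.
Proof.
have two_neq0 : (2%:R : algC) != 0 by rewrite pnatr_eq0.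
by rewrite big_bool; case: b; case: c; rewrite /minus_proj /=; field.
Qed.

Lemma flip_proj_idem a b : \sum_c flip_proj a c * flip_proj c b = flip_proj a b.
Proof.
have compl_idem : \sum_r ((a.1 == r)%:R - projZ a.1 r) * ((r == b.1)%:R - projZ r b.1)
    = (a.1 == b.1)%:R - projZ a.1 b.1.
  have expand r : ((a.1 == r)%:R - projZ a.1 r) * ((r == b.1)%:R - projZ r b.1)
    = (a.1 == r)%:R * (r == b.1)%:R - (a.1 == r)%:R * projZ r b.1
      - (r == b.1)%:R * projZ a.1 r + projZ a.1 r * projZ r b.1 by ring.
  under eq_bigr do rewrite expand.
  by rewrite !big_split /= !sumrN !sum_delta' sum_delta projZ_idem; ring.
rewrite sum_pair [RHS]/flip_proj -compl_idem -(minus_proj_idem a.2 b.2) mulr_suml.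
apply: eq_bigr => r _; rewrite mulr_sumr; apply: eq_bigr => o _.
by rewrite /flip_proj /=; ring.
Qed.

Lemma W_unitary : kmx kW \is unitarymx.
Proof.
apply: kmx_unitary => [a b|a b|]; last exact/proj_refl_involutive/flip_proj_idem.
  by rewrite /kW /flip_proj eq_sym projZ_sym [a.1 == b.1]eq_sym /minus_proj [b.2 == a.2]eq_sym.
apply: conj_Creal.
rewrite /kW /flip_proj rpredB ?realn // rpredM ?realn // rpredM ?rpredB ?realn ?projZ_real //.
by rewrite /minus_proj; case: (_ == _); rewrite ?rpredN rpredV realn.
Qed.

End Construction.

Section Evolution.
Variable n : nat.
Variable x : 'I_n -> bool.
Notation Reg := (Reg n).
Notation Basis := (Basis n).
Notation s := (sgn x).

(* The states of the algorithm on input x, with s_j = (-1)^(x_j):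
   psi1 = O_x U0 |0> = n^(-1/2) sum_j s_j |j,0>,
   psi2 = V psi1 = sum_j coef j fvec j,   phi = O_x psi2,
   and the final state W phi, whose output-0 part is the projection onto Z. *)
Definition reg_sign (p : Reg) : algC := if p.1 is Some j then s j else 1.
Definition psi1 (p : Reg) : algC := reg_sign p * unif p.
Definition coef (i : 'I_n) : algC := s i * isqrt_n n.
Definition psi2 (p : Reg) : algC := \sum_i coef i * fvec i p.
Definition phi (p : Reg) : algC := reg_sign p * psi2 p.
Definition projZ_phi (p : Reg) : algC := \sum_r projZ p r * phi r.
Definition final (a : Basis) : algC :=
  if a.2 then phi a.1 - projZ_phi a.1 else projZ_phi a.1.

Lemma step_U0 a : kapply (@kU0 n) (fun a => (a == start n)%:R) a = out0 (unif (n:=n)) a.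
Proof.
rewrite /kapply /kU0 refl_apply big_ord1.
have -> : \sum_b qU0 ord0 b * (b == start n)%:R = 1.
  rewrite (eq_bigr (fun b => (b == start n)%:R * qU0 ord0 b)) => [|b _]; last exact: mulrC.
  by rewrite sum_delta /qU0 /out0 /= subr0.
rewrite mulr1 /qU0 /out0; case: a => p [] /=; first by rewrite subr0; case: p => [[?|] [?|]].
by case: p => [[?|] [?|]] /=; rewrite ?subr0 ?subrr ?sub0r ?opprK.
Qed.

Lemma step_query1 a : oracle_sign x a * out0 (unif (n:=n)) a = out0 psi1 a.
Proof. by case: a => p [] //=; rewrite /out0 /= mulr0. Qed.

(* Only the |i,0> components of psi1 meet the reflection vectors of V. *)
Lemma qV_dot_psi1 i : \sum_p (einp i p - fvec i p) * psi1 p = coef i.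
Proof.
rewrite sum_Reg /psi1 /= !mulr0.
rewrite big1 ?addr0 => [|w _]; last by rewrite mulr0.
rewrite [X in _ + X]big1 ?addr0 => [|j _]; last first.
  by apply: big1 => a _; apply: big1 => b _; rewrite !mulr0.
rewrite add0r (eq_bigr (fun k => (k == i)%:R * coef k)) ?sum_delta // => k _.
by rewrite /fvec /coef /= !mulr0 addr0 subr0 mulrC.
Qed.

Lemma psi1_einp p : psi1 p = \sum_i einp i p * coef i.
Proof.
rewrite /psi1; case: p => [[j|] [w|]] /=.
- by rewrite mulr0 big1 // => k _; rewrite mul0r.
- by rewrite sum_delta' /coef mulrC.
- by rewrite mulr0 big1 // => k _; rewrite mul0r.
- by rewrite mulr0 big1 // => k _; rewrite mul0r.
Qed.

Lemma step_V a : kapply (@kV n) (out0 psi1) a = out0 psi2 a.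
Proof.
rewrite /kapply /kV refl_apply /qV.
under eq_bigr do rewrite dot_out0 qV_dot_psi1.
case: a => p [] /=; rewrite /out0 /=; first by rewrite big1 ?subrr // => i _; rewrite mul0r.
by rewrite psi1_einp -sumrB /psi2; apply: eq_bigr => i _; ring.
Qed.

Lemma step_query2 a : oracle_sign x a * out0 psi2 a = out0 phi a.
Proof. by case: a => p [] //=; rewrite /out0 /= mulr0. Qed.

Lemma step_W a : kapply (@kW n) (out0 phi) a = final a.
Proof.
rewrite /kapply /kW; under eq_bigr do rewrite mulrBl.
rewrite sumrB sum_delta'.
have -> : \sum_b 2%:R * flip_proj a b * out0 phi b
    = 2%:R * (minus_proj a.2 false * (phi a.1 - projZ_phi a.1)).
  under eq_bigr do rewrite -mulrA.
  rewrite -mulr_sumr sum_pair; congr (_ * _).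
  under eq_bigr do rewrite big_bool /out0 /= mulr0 add0r.
  rewrite /flip_proj /projZ_phi -(sum_delta' a.1 phi) -sumrB mulr_sumr.
  by apply: eq_bigr => r _; ring.
have two_neq0 : (2%:R : algC) != 0 by rewrite pnatr_eq0.
by case: a => p [] /=; rewrite /final /out0 /minus_proj /=; field.
Qed.

Lemma final_state_kvec :
  kmx (@kW n) *m (oracle (dwork n) x *m (kmx (@kV n) *m
    (oracle (dwork n) x *m (kmx (@kU0 n) *m init_state n (dwork n))))) = kvec final.
Proof.
rewrite init_kvec kmx_kvec (eq_kvec step_U0) oracle_kvec (eq_kvec step_query1).
rewrite kmx_kvec (eq_kvec step_V) oracle_kvec (eq_kvec step_query2).
by rewrite kmx_kvec (eq_kvec step_W).
Qed.

End Evolution.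

Section Weights.
Variables (n : nat) (x : 'I_n -> bool).
Notation s := (sgn x).

Definition ssum : algC := \sum_j s j.

Lemma sgn_sq k : s k * s k = 1.
Proof. by rewrite /sgn; case: (x k); rewrite ?mulrNN mulr1. Qed.

Lemma ssum_weight : ssum = n%:R - 2%:R * (hweight x)%:R.
Proof.
have -> : (hweight x)%:R = \sum_j (x j)%:R :> algC.
  rewrite /hweight cardsE -sum1_card natr_sum big_mkcond /=.
  by apply: eq_bigr => i _; rewrite unfold_in; case: (x i).
rewrite /ssum (eq_bigr (fun j => 1 - 2%:R * (x j)%:R)) => [|j _].
  by rewrite sumrB sumr_const card_ord -mulr_sumr.
by rewrite /sgn; case: (x j); rewrite ?mulr1 ?mulr0 ?subr0 //; ring.
Qed.

Lemma ssum_balanced : ~~ odd n -> hweight x = n./2 -> ssum = 0.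
Proof.
move=> n_even wx; rewrite ssum_weight wx -natrM mul2n.
by rewrite -{1}(odd_double_half n) (negbTE n_even) add0n subrr.
Qed.

Lemma weight_one : hweight x = 1%N -> exists e, forall k, x k = (k == e).
Proof.
by rewrite /hweight => /eqP/cards1P [e Ae]; exists e => k; rewrite -in_set1 -Ae inE.
Qed.

Lemma weight_pred : (0 < n)%N -> hweight x = n.-1 -> exists e, forall k, x k = (k != e).
Proof.
move=> n_gt0 wx; have /eqP/cards1P [e Ae] : #|~: [set i | x i]| = 1%N.
  by have := cardsC [set i | x i]; rewrite card_ord -/(hweight x) wx; lia.
by exists e => k; rewrite -in_set1 -Ae !inE negbK.
Qed.

Lemma weight_zero : hweight x = 0%N -> forall k, x k = false.
Proof. by rewrite /hweight => /eqP; rewrite cards_eq0 => /eqP A0 k; rewrite -[x k]inE A0 inE. Qed.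

Lemma weight_full : hweight x = n -> forall k, x k = true.
Proof.
move=> wx k; have /eqP : #|~: [set i | x i]| = 0%N.
  by have := cardsC [set i | x i]; rewrite card_ord -/(hweight x) wx; lia.
rewrite cards_eq0 => /eqP A0.
have : k \notin ~: [set i | x i] by rewrite A0 inE.
by rewrite !inE negbK.
Qed.

(* For nearly constant inputs, s_j (s_a - s_b) = S/(n-2) (s_a - s_b) whenever
   a, b <> j: if x_a <> x_b, the odd position is a or b, so x_j is the
   majority value. *)
Lemma nearly_constant_sign : (2 < n)%N -> hweight x \in [:: 0%N; 1%N; n.-1; n] ->
  forall j a b, a != j -> b != j -> ssum * (s a - s b) = (n%:R - 2%:R) * s j * (s a - s b).
Proof.
move=> n_gt2 wx j a b aj bj; case xab: (x a == x b).
  by rewrite /sgn (eqP xab) subrr !mulr0.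
move: wx; rewrite !inE => /or4P [] /eqP wx.
- by move: xab; rewrite !weight_zero.
- have [e xe] := weight_one wx; have je : j != e.
    by apply: contraFneq xab => je; rewrite !xe -je (negbTE aj) (negbTE bj).
  by rewrite ssum_weight wx /sgn !xe (negbTE je); ring.
- have [|e xe] := weight_pred _ wx; first lia.
  have je : j != e.
    by apply: contraFneq xab => je; rewrite !xe -je aj bj.
  have pred_n : (n.-1)%:R = n%:R - 1 :> algC by rewrite -subn1 natrB //; lia.
  by rewrite ssum_weight wx pred_n /sgn !xe je; ring.
- by move: xab; rewrite !weight_full.
Qed.

End Weights.

Section Projection.
Variable n : nat.
Hypothesis n_gt2 : (2 < n)%N.
Variable x : 'I_n -> bool.
Notation Reg := (Reg n).
Notation s := (sgn x).
Notation S := (ssum x).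

Definition sgadget (p : Reg) : algC := \sum_i s i * gadget i p.

Lemma sgadget_gadget j a b : sgadget (Some j, Some (a, b)) = avoid j a b * (s a - s b).
Proof.
rewrite /sgadget /= (eq_bigr (fun i => avoid j a b * ((a == i)%:R * s i - (b == i)%:R * s i)));
  last by move=> i _; ring.
by rewrite -mulr_sumr sumrB !sum_delta'.
Qed.

Lemma phiE p :
  phi x p = isqrt_n n * isqrt_n n * S * e0 p + isqrt_n n * isqrt_kappa n * (reg_sign x p * sgadget p).
Proof.
have psi2E : psi2 x p = isqrt_n n * isqrt_n n * S * e0 p + isqrt_n n * isqrt_kappa n * sgadget p.
  rewrite /psi2 (eq_bigr (fun i => isqrt_n n * isqrt_n n * e0 p * s i
    + isqrt_n n * isqrt_kappa n * (s i * gadget i p))) => [|i _]; last by rewrite /coef /fvec; ring.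
  by rewrite big_split /= -!mulr_sumr /ssum /sgadget; ring.
by rewrite /phi psi2E {psi2E}; case: p => [[j|] w]; rewrite /= ?mul1r //; ring.
Qed.

Lemma gadget_dot_phi m :
  \sum_r gadget m r * phi x r = isqrt_n n * isqrt_kappa n * (2%:R * S * (n%:R * s m - S)).
Proof.
rewrite -gadget_sign_pairing; last exact: sgn_sq.
rewrite sum_Reg_gadget => [|w|i]; rewrite /= ?mul0r //.
rewrite mulr_sumr; apply: eq_bigr => j _; rewrite !mulr_sumr; apply: eq_bigr => a _.
rewrite !mulr_sumr; apply: eq_bigr => b _.
by rewrite phiE sgadget_gadget /reg_sign /= -[in RHS]avoid_idem; ring.
Qed.

Lemma projZ_phiE p : projZ_phi x p =
  isqrt_n n * isqrt_n n * S * e0 p + isqrt_n n * isqrt_kappa n * (2%:R * S * n%:R / kappa n) * sgadget p.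
Proof.
have expand : projZ_phi x p = e0 p * phi x (None, None)
    + (kappa n)^-1 * \sum_m gadget m p * (\sum_r gadget m r * phi x r).
  rewrite /projZ_phi /projZ; under eq_bigr do rewrite mulrDl.
  rewrite big_split /= -(sum_e0 (phi x)) mulr_sumr; congr (_ + _).
    by apply: eq_bigr => r _; rewrite mulrA.
  under eq_bigr do rewrite -mulrA mulr_suml.
  rewrite -mulr_sumr exchange_big /=; congr (_ * _); apply: eq_bigr => m _.
  by rewrite mulr_sumr; apply: eq_bigr => r _; rewrite mulrA.
have sgadget_e0 : sgadget (None, None) = 0 by rewrite /sgadget big1 // => i _; rewrite mulr0.
rewrite expand phiE sgadget_e0 /= mulr1 !mulr0 addr0 mulrC; congr (_ + _).
under eq_bigr do rewrite gadget_dot_phi.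
rewrite (eq_bigr (fun m => isqrt_n n * isqrt_kappa n * 2%:R * S
   * (n%:R * (s m * gadget m p) - S * gadget m p))) => [|m _]; last by ring.
rewrite -mulr_sumr sumrB -!mulr_sumr sum_gadget -/(sgadget p).
by field; rewrite (n_neq0 n_gt2) andbT pnatr_eq0; apply/eqP; lia.
Qed.

Lemma projZ_phi_balanced : S = 0 -> forall p, projZ_phi x p = 0.
Proof. by move=> S0 p; rewrite projZ_phiE S0; ring. Qed.

Lemma projZ_phi_nearly_constant : hweight x \in [:: 0%N; 1%N; n.-1; n] ->
  forall p, projZ_phi x p = phi x p.
Proof.
move=> wx p; rewrite projZ_phiE phiE; congr (_ + _).
case: p => [[j|] [[a b]|]]; try by rewrite /sgadget big1 ?mulr0 // => i _; rewrite mulr0.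
rewrite sgadget_gadget /reg_sign /= /avoid.
case: (boolP (a != j)) => aj; case: (boolP (b != j)) => bj; rewrite /= ?(mul0r, mulr0) //.
transitivity (isqrt_n n * isqrt_kappa n * (2%:R * n%:R / kappa n) * (S * (s a - s b)));
  first by ring.
rewrite (nearly_constant_sign n_gt2 wx aj bj) kappaE //.
by field; rewrite (n_neq0 n_gt2) nsub2_neq0.
Qed.

End Projection.

Unset Implicit Arguments.

Theorem mainTheorem5 (n : nat) (hn4 : (4 <= n)%N) (hnev : ~~ odd n) :
  exists (d : nat) (U0 : 'M[algC]_(qdim n d)) (Us : seq 'M[algC]_(qdim n d)),
    [/\ size Us = 2%N,
        U0 \is unitarymx,
        all (fun U => U \is unitarymx) Us,
        (forall x : 'I_n -> bool, hweight x = n./2 -> prob_out U0 Us x true = 1) &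
        (forall x : 'I_n -> bool,
            hweight x \in [:: 0%N; 1%N; n.-1; n] -> prob_out U0 Us x false = 1)].
Proof.
have n_gt2 : (2 < n)%N by lia.
have U0u := U0_unitary n_gt2.
have Usu : all (fun U => U \is unitarymx) [:: kmx (@kV n); kmx (@kW n)].
  by rewrite /= (V_unitary n_gt2) (W_unitary n_gt2).
have prob x b := prob_out_kvec b (final_state_kvec x).
exists (dwork n), (kmx (@kU0 n)), [:: kmx (@kV n); kmx (@kW n)]; split => // x wx.
- (* balanced: the output-0 amplitudes are the Z-component of phi, which is 0 *)
  rewrite -(prob_out_total x U0u Usu) [prob_out _ _ x false]prob big1 ?addr0 // => p _.
  by rewrite /final /= (projZ_phi_balanced n_gt2 (ssum_balanced hnev wx)) normr0 expr0n.
- (* nearly constant: the output-1 amplitudes are phi minus its Z-component, 0 *)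
  rewrite -(prob_out_total x U0u Usu) [prob_out _ _ x true]prob big1 ?add0r // => p _.
  by rewrite /final /= (projZ_phi_nearly_constant n_gt2 wx) subrr normr0 expr0n.
Qed.
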